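(* Let $(G,\Lambda)$ be a pseudo free self-similar action. Then $\Lambda$ is $G$-aperiodic if and only if every cycline triple is trivial, i.e. every $(\mu,g,\nu)\in\mathcal{C}_{G,\Lambda}$ satisfies $\mu=\nu$ and $g=1_G$.
   Context: Let $k\ge1$. A $k$-graph is a countable small category $\Lambda$ together with a functor $d:\Lambda\to\mathbb{N}^k$ (the degree map) with the unique factorization property: for every $\mu\in\Lambda$ and $m,n\in\mathbb{N}^k$ with $d(\mu)=m+n$ there are unique $\alpha,\beta\in\Lambda$ with $d(\alpha)=m$, $d(\beta)=n$ and $\mu=\alpha\beta$. Write $\Lambda^n=d^{-1}(n)$; $\Lambda^0$ is identified with the set of objects (vertices), and $r,s$ denote range and source. For $v\in\Lambda^0$ and $n\in\mathbb{N}^k$ write $v\Lambda=r^{-1}(v)$, $v\Lambda^n=v\Lambda\cap\Lambda^n$. All $k$-graphs are assumed row-finite ($|v\Lambda^n|<\infty$) and source-free ($v\Lambda^n\neq\emptyset$) for all $v,n$. Infinite paths: let $\Omega_k=\{(p,q)\in\mathbb{N}^k\times\mathbb{N}^k:p\le q\}$ with $r(p,q)=(p,p)$, $s(p,q)=(q,q)$, $(p,q)(q,m)=(p,m)$, $d(p,q)=q-p$. An infinite path is a degree-preserving functor $x:\Omega_k\to\Lambda$; $\Lambda^\infty$ is the set of infinite paths, $v\Lambda^\infty=\{x:x(0,0)=v\}$, the shift is $\sigma^n(x)(p,q)=x(p+n,q+n)$, and for $\mu\in\Lambda$, $x\in s(\mu)\Lambda^\infty$, $\mu x$ is the unique infinite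 path $y$ with $y(0,d(\mu))=\mu$ and $\sigma^{d(\mu)}(y)=x$. Self-similar actions: $G$ is a countable discrete group. A self-similar action $(G,\Lambda)$ consists of an action of $G$ on $\Lambda$ by automorphisms (bijections preserving $d$, $r$, $s$), written $g\cdot\mu$, and a restriction map $G\times\Lambda\to G$, $(g,\mu)\mapsto g|_\mu$, such that for all $g,h\in G$, $v\in\Lambda^0$ and $\mu,\nu$ with $s(\mu)=r(\nu)$: $g\cdot(\mu\nu)=(g\cdot\mu)(g|_\mu\cdot\nu)$; $g|_v=g$; $g|_{\mu\nu}=(g|_\mu)|_\nu$; $1_G|_\mu=1_G$; $(gh)|_\mu=g|_{h\cdot\mu}\,h|_\mu$. For $x\in\Lambda^\infty$, $(g\cdot x)(p,q)=g|_{x(0,p)}\cdot x(p,q)$. The action is pseudo free if $g\cdot\mu=\mu$ and $g|_\mu=1_G$ for some $\mu\in\Lambda$ imply $g=1_G$. $G$-aperiodicity: an infinite path $x$ is $G$-aperiodic if for all $g\in G$ and $p,q\in\mathbb{N}^k$ with $g\neq1_G$ or $p\neq q$ one has $\sigma^p(x)\neq g\cdot\sigma^q(x)$; otherwise $x$ is $G$-periodic. $\Lambda$ is $G$-aperiodic if for every $v\in\Lambda^0$ there is a $G$-aperiodic $x\in v\Lambda^\infty$, and $G$-periodic otherwise. Cycline triples: a triple $(\mu,g,\nu)\in\Lambda\times G\times\Lambda$ with $s(\mu)=g\cdot s(\nu)$ is cycline if $\mu(g\cdot x)=\nu x$ for all $x\in s(\nu)\Lambda^\infty$; $\mathcal{C}_{G,\Lambda}$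 is the set of cycline triples. Triples $(\mu,1_G,\mu)$ are cycline and are called trivial. *)

From HB Require Import structures.
From mathcomp Require Import all_boot.
From Stdlib Require List.
Set Implicit Arguments.
Unset Strict Implicit.
Unset Printing Implicit Defensive.

Local Open Scope group_scope.

Definition countable (T : Type) : Prop := exists f : T -> nat, injective f.

Definition deg (k : nat) := {ffun 'I_k -> nat}.
Definition deg0 {k} : deg k := [ffun=> 0%N].
Definition degadd {k} (m n : deg k) : deg k := [ffun i => (m i + n i)%N].
(* truncated pointwise subtraction; only used when n <= m *)
Definition degsub {k} (m n : deg k) : deg k := [ffun i => (m i - n i)%N].
Definition degle {k} (m n : deg k) : bool := [forall i, m i <= n i].

(* ---------- k-graphs ----------
   A countable small category (vertices = objects, paths = morphisms, with
   composition [kcomp] meaningful on composable pairs s mu = r nu) together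
   with a degree functor kd into N^k having the unique factorization property. *)
Record kgraph (k : nat) := KGraph {
  kvert : Type;
  kpath : Type;
  kvert_countable : countable kvert;
  kpath_countable : countable kpath;
  kr : kpath -> kvert;
  ks : kpath -> kvert;
  kid : kvert -> kpath;
  kcomp : kpath -> kpath -> kpath;
  kd : kpath -> deg k;
  kr_id : forall v, kr (kid v) = v;
  ks_id : forall v, ks (kid v) = v;
  kid_l : forall mu, kcomp (kid (kr mu)) mu = mu;
  kid_r : forall mu, kcomp mu (kid (ks mu)) = mu;
  kr_comp : forall mu nu, ks mu = kr nu -> kr (kcomp mu nu) = kr mu;
  ks_comp : forall mu nu, ks mu = kr nu -> ks (kcomp mu nu) = ks nu;
  kcomp_assoc : forall mu nu la, ks mu = kr nu -> ks nu = kr la ->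
      kcomp (kcomp mu nu) la = kcomp mu (kcomp nu la);
  kd_id : forall v, kd (kid v) = deg0;
  kd_comp : forall mu nu, ks mu = kr nu -> kd (kcomp mu nu) = degadd (kd mu) (kd nu);
  kfactor : forall mu (m n : deg k), kd mu = degadd m n ->
      exists al be, [/\ kd al = m, kd be = n, ks al = kr be, mu = kcomp al be &
        forall al' be', kd al' = m -> kd be' = n -> ks al' = kr be' ->
          mu = kcomp al' be' -> al' = al /\ be' = be]
}.

Arguments kr {k} _ _.
Arguments ks {k} _ _.
Arguments kid {k} _ _.
Arguments kcomp {k} _ _ _.
Arguments kd {k} _ _.

Definition row_finite {k} (L : kgraph k) : Prop :=
  forall (v : kvert L) (n : deg k), exists s : list (kpath L),
    forall mu, kr L mu = v -> kd L mu = n -> List.In mu s.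

Definition source_free {k} (L : kgraph k) : Prop :=
  forall (v : kvert L) (n : deg k), exists mu, kr L mu = v /\ kd L mu = n.

(* ---------- Infinite paths ----------
   A degree-preserving functor x : Omega_k -> Lambda, represented by its
   values x p q on morphisms (p,q), p <= q (values for p not <= q are junk). *)
Definition ipath {k} (L : kgraph k) := deg k -> deg k -> kpath L.

Definition is_ipath {k} (L : kgraph k) (x : ipath L) : Prop :=
  [/\ forall p q, degle p q -> kd L (x p q) = degsub q p,
      forall p, x p p = kid L (kr L (x p p)) &
      forall p q m, degle p q -> degle q m ->
        ks L (x p q) = kr L (x q m) /\ x p m = kcomp L (x p q) (x q m)].

Definition ieq {k} (L : kgraph k) (x y : ipath L) : Prop :=
  forall p q, degle p q -> x p q = y p q.

Definition ishift {k} (L : kgraph k) (n : deg k) (x : ipath L) : ipath L :=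
  fun p q => x (degadd p n) (degadd q n).

Definition iconcat {k} (L : kgraph k) (mu : kpath L) (x y : ipath L) : Prop :=
  [/\ is_ipath y, y deg0 (kd L mu) = mu & ieq (ishift (kd L mu) y) x].

Record ssaction (G : groupType) {k} (L : kgraph k) := SSAction {
  actP : G -> kpath L -> kpath L;
  actV : G -> kvert L -> kvert L;
  res : G -> kpath L -> G;
  actP1 : forall mu, actP 1 mu = mu;
  actPM : forall g h mu, actP (g * h) mu = actP g (actP h mu);
  actV1 : forall v, actV 1 v = v;
  actVM : forall g h v, actV (g * h) v = actV g (actV h v);
  actP_bij : forall g, bijective (actP g);
  actV_bij : forall g, bijective (actV g);
  actP_id : forall g v, actP g (kid L v) = kid L (actV g v);
  actP_d : forall g mu, kd L (actP g mu) = kd L mu;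
  actP_r : forall g mu, kr L (actP g mu) = actV g (kr L mu);
  actP_s : forall g mu, ks L (actP g mu) = actV g (ks L mu);
  ss_comp : forall g mu nu, ks L mu = kr L nu ->
      actP g (kcomp L mu nu) = kcomp L (actP g mu) (actP (res g mu) nu);
  res_vert : forall g v, res g (kid L v) = g;
  res_comp : forall g mu nu, ks L mu = kr L nu ->
      res g (kcomp L mu nu) = res (res g mu) nu;
  res_one : forall mu, res 1 mu = 1;
  res_mul : forall g h mu, res (g * h) mu = res g (actP h mu) * res h mu
}.

Arguments actP {G k L} _ _ _.
Arguments actV {G k L} _ _ _.
Arguments res {G k L} _ _ _.

Section Defs.
Variables (G : groupType) (k : nat) (L : kgraph k) (A : ssaction G L).

Definition pseudo_free : Prop :=
  forall (g : G) (mu : kpath L), actP A g mu = mu -> res A g mu = 1 -> g = 1.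

Definition iact (g : G) (x : ipath L) : ipath L :=
  fun p q => actP A (res A g (x deg0 p)) (x p q).

Definition G_aperiodic_path (x : ipath L) : Prop :=
  forall (g : G) (p q : deg k), (g <> 1 \/ p <> q) ->
    ~ ieq (ishift p x) (iact g (ishift q x)).

Definition G_aperiodic : Prop :=
  forall v : kvert L, exists x : ipath L,
    [/\ is_ipath x, x deg0 deg0 = kid L v & G_aperiodic_path x].

Definition cycline (mu : kpath L) (g : G) (nu : kpath L) : Prop :=
  ks L mu = actV A g (ks L nu) /\
  forall x : ipath L, is_ipath x -> x deg0 deg0 = kid L (ks L nu) ->
    exists y : ipath L, iconcat mu (iact g x) y /\ iconcat nu x y.

End Defs.

From HB Require Import structures.
From mathcomp Require Import all_boot zify.
From Stdlib Require Import ClassicalEpsilon Classical.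

(* If [x] is G-aperiodic and [(mu, g, nu)] is cycline, the path
   [y = mu (g x) = nu x] gives [sigma^(d mu) x = g|_(x(0, d nu)) sigma^(d nu) x], so
   aperiodicity forces [d mu = d nu] and [g|_(x(0, d nu)) = 1]; then [mu = nu], and
   pseudo-freeness applied to [x(0, d nu)] gives [g = 1].
   Conversely, the candidate periods [(g, p, q)] form a countable set, and an
   aperiodic path at [v] is the limit of finite paths whose [n]-th stage rules
   out the [n]-th period.  A stage exists because, if every infinite path
   [rho z] through a long finite path [rho] satisfied
   [sigma^p (rho z) = g . sigma^q (rho z)], then the tails of [rho] after [p] and
   after [q] would form a cycline triple; triviality of that triple forces
   [p = q], and then pseudo-freeness forces [g = 1]. *)

Set Implicit Arguments.
Unset Strict Implicit.
Unset Printing Implicit Defensive.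

Lemma degleP k (p q : deg k) : reflect (forall i, p i <= q i) (degle p q).
Proof. exact: forallP. Qed.

Ltac deg_lia :=
  let i := fresh "i" in
  repeat match goal with
  | H : is_true (degle _ _) |- _ => move/degleP: H => H
  | H : @eq (deg _) _ _ |- _ => move/ffunP: H => H
  end;
  first [apply/degleP | apply/ffunP] => i;
  repeat match goal with H : forall _, _ |- _ => move: (H i); clear H end;
  rewrite ?ffunE /=; lia.

Lemma degle_refl k (p : deg k) : degle p p.
Proof. by apply/degleP. Qed.

Lemma degle_trans k (p q r : deg k) : degle p q -> degle q r -> degle p r.
Proof. by move=> pq qr; deg_lia. Qed.

Lemma deg0_le k (p : deg k) : degle deg0 p.
Proof. by deg_lia. Qed.

Lemma degleD2r k (p q n : deg k) : degle p q -> degle (degadd p n) (degadd q n).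
Proof. by move=> pq; deg_lia. Qed.

Lemma degadd0 k (p : deg k) : degadd deg0 p = p.
Proof. by deg_lia. Qed.

Lemma degaddC k (m n : deg k) : degadd m n = degadd n m.
Proof. by deg_lia. Qed.

Section Segments.
Variables (k : nat) (L : kgraph k).
Local Notation P := (kpath L).
Local Notation comp := (kcomp L).
Local Notation d := (kd L).

Definition is_dfactor (l : P) m (ab : P * P) :=
  [/\ d ab.1 = m, d ab.2 = degsub (d l) m, ks L ab.1 = kr L ab.2 & l = comp ab.1 ab.2].

Definition dfactor (l : P) m : P * P := epsilon (inhabits (l, l)) (is_dfactor l m).

Lemma dfactor_spec l m : degle m (d l) -> is_dfactor l m (dfactor l m).
Proof.
move=> ml; apply: epsilon_spec.
have E : d l = degadd m (degsub (d l) m) by deg_lia.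
by have [al [be [? ? ? ? _]]] := kfactor E; exists (al, be).
Qed.

Lemma dfactor_unique l m a b : degle m (d l) -> d a = m -> ks L a = kr L b ->
  l = comp a b -> dfactor l m = (a, b).
Proof.
move=> ml ha hab hl.
have E : d l = degadd m (degsub (d l) m) by deg_lia.
have [al [be [_ _ _ _ U]]] := kfactor E.
have db : d b = degsub (d l) m by rewrite hl (kd_comp hab) ha; deg_lia.
have [s1 s2 s3 s4] := dfactor_spec ml.
have [-> ->] := U _ _ ha db hab hl.
by have [<- <-] := U _ _ s1 s2 s3 s4; case: (dfactor l m).
Qed.

Lemma kd0_kid (m : P) : d m = deg0 -> m = kid L (kr L m).
Proof.
move=> dm.
have E : d m = degadd deg0 deg0 by rewrite dm; deg_lia.
have [al [be [_ _ _ _ U]]] := kfactor E.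
have [h1 _] := U _ m (kd_id _) dm (ks_id _) (esym (kid_l _)).
have [h2 _] := U m _ dm (kd_id _) (esym (kr_id _)) (esym (kid_r _)).
by rewrite {1}h2 -h1.
Qed.

(* The segment [l(p, q)] of a finite path [l]; meaningful for [p <= q <= d l]. *)
Definition seg (l : P) (p q : deg k) : P := (dfactor (dfactor l p).2 (degsub q p)).1.

Lemma seg_unique l p q a b c : degle p q -> degle q (d l) ->
  ks L a = kr L b -> ks L b = kr L c -> d a = p -> d b = degsub q p ->
  l = comp a (comp b c) -> seg l p q = b.
Proof.
move=> pq ql ab bc da db hl.
have ab' : ks L a = kr L (comp b c) by rewrite kr_comp.
have dl : d l = degadd p (degadd (degsub q p) (d c)).
  by rewrite hl (kd_comp ab') (kd_comp bc) da db.
rewrite /seg (dfactor_unique _ da ab' hl) /=; last by deg_lia.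
by rewrite (dfactor_unique _ db bc) //; rewrite (kd_comp bc) db; deg_lia.
Qed.

Lemma seg_decomp l p q : degle p q -> degle q (d l) ->
  exists a b c, [/\ ks L a = kr L b /\ ks L b = kr L c, d a = p, d b = degsub q p,
    d c = degsub (d l) q & l = comp a (comp b c) /\ seg l p q = b].
Proof.
move=> pq ql.
have [s1 s2 s3 s4] := dfactor_spec (degle_trans pq ql).
set a := (dfactor l p).1 in s1 s3 s4 *; set r := (dfactor l p).2 in s2 s3 s4 *.
have [t1 t2 t3 t4] := dfactor_spec (l := r) (m := degsub q p) ltac:(rewrite s2; deg_lia).
exists a, (dfactor r (degsub q p)).1, (dfactor r (degsub q p)).2; split => //.
- by split => //; rewrite s3 {1}t4 kr_comp.
- by rewrite t2 s2; deg_lia.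
- by split; [rewrite -t4 |].
Qed.

Lemma seg_deg l p q : degle p q -> degle q (d l) -> d (seg l p q) = degsub q p.
Proof. by move=> pq ql; have [a [b [c [_ _ db _ [_ ->]]]]] := seg_decomp pq ql. Qed.

Lemma seg_diag l p : degle p (d l) -> seg l p p = kid L (kr L (seg l p p)).
Proof. by move=> pl; apply: kd0_kid; rewrite seg_deg ?degle_refl //; deg_lia. Qed.

Lemma seg_whole l : seg l deg0 (d l) = l.
Proof.
apply: (@seg_unique l deg0 (d l) (kid L (kr L l)) l (kid L (ks L l))).
- exact: deg0_le.
- exact: degle_refl.
- by rewrite ks_id.
- by rewrite kr_id.
- by rewrite kd_id.
- by deg_lia.
- by rewrite kid_r kid_l.
Qed.

Lemma ks_seg_end l p : degle p (d l) -> ks L (seg l p (d l)) = ks L l.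
Proof.
move=> pl; have [a [b [c [[ab bc] _ _ dc [hl ->]]]]] := seg_decomp pl (degle_refl _).
have c0 : d c = deg0 by rewrite dc; deg_lia.
by rewrite hl ks_comp ?kr_comp // ks_comp // bc (kd0_kid c0) ks_id kr_id.
Qed.

Lemma seg_comp l p q m : degle p q -> degle q m -> degle m (d l) ->
  ks L (seg l p q) = kr L (seg l q m) /\ seg l p m = comp (seg l p q) (seg l q m).
Proof.
move=> pq qm ml.
have [a [X [c [[aX Xc] da dX dc [hl ->]]]]] := seg_decomp (degle_trans pq qm) ml.
have [t1 t2 t3 t4] := dfactor_spec (l := X) (m := degsub q p) ltac:(rewrite dX; deg_lia).
set B := (dfactor X (degsub q p)).1 in t1 t3 t4 *.
set C := (dfactor X (degsub q p)).2 in t2 t3 t4 *.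
have Cc : ks L C = kr L c by rewrite -Xc t4 ks_comp.
have aB : ks L a = kr L B by rewrite aX t4 kr_comp.
have e1 : l = comp a (comp B (comp C c)) by rewrite hl {1}t4 kcomp_assoc.
have -> : seg l p q = B.
  apply: (seg_unique _ _ aB _ da t1 e1) => //; first exact: degle_trans qm ml.
  by rewrite kr_comp.
suff -> : seg l q m = C by [].
apply: (@seg_unique l q m (comp a B) C c) => //.
- by rewrite ks_comp.
- by rewrite (kd_comp aB) da t1; deg_lia.
- by rewrite t2 dX; deg_lia.
- by rewrite e1 -kcomp_assoc // kr_comp.
Qed.

Definition prefix (a b : P) := exists be, ks L a = kr L be /\ b = comp a be.

Lemma prefix_refl a : prefix a a.
Proof. by exists (kid L (ks L a)); rewrite kr_id kid_r. Qed.

Lemma prefix_trans a b c : prefix a b -> prefix b c -> prefix a c.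
Proof.
move=> [x [ax ->]] [y [xy ->]].
have xy' : ks L x = kr L y by move: xy; rewrite ks_comp.
by exists (comp x y); rewrite kr_comp // kcomp_assoc.
Qed.

Lemma prefix_compl rho a b : ks L rho = kr L a -> prefix a b ->
  prefix (comp rho a) (comp rho b).
Proof.
move=> ra [be [abe ->]].
by exists be; rewrite ks_comp // -kcomp_assoc.
Qed.

Lemma prefix_deg a b : prefix a b -> degle (d a) (d b).
Proof. by move=> [x [ax ->]]; rewrite (kd_comp ax); deg_lia. Qed.

Lemma seg_prefix a b s t : prefix a b -> degle s t -> degle t (d a) ->
  seg b s t = seg a s t.
Proof.
move=> ab st ta.
have [A1 [A2 [A3 [[h12 h23] d1 d2 d3 [ha ->]]]]] := seg_decomp st ta.
have [be [abe hb]] := ab.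
have A3b : ks L A3 = kr L be by rewrite -abe ha ks_comp ?ks_comp // kr_comp.
apply: (@seg_unique b s t A1 A2 (comp A3 be)) => //.
- exact: degle_trans ta (prefix_deg ab).
- by rewrite kr_comp.
- by rewrite hb ha !kcomp_assoc ?kr_comp ?ks_comp.
Qed.

End Segments.

Section InfinitePaths.
Variables (k : nat) (L : kgraph k).
Local Notation P := (kpath L).
Local Notation comp := (kcomp L).
Local Notation d := (kd L).

Lemma ipath_seg (x : ipath L) s t M : is_ipath x -> degle s t -> degle t M ->
  x s t = seg (x deg0 M) s t.
Proof.
move=> [H1 _ H3] st tM.
have [e1 e2] := H3 _ _ _ (deg0_le s) (degle_trans st tM).
have [e3 e4] := H3 _ _ _ st tM.
symmetry; apply: (@seg_unique _ _ _ _ _ (x deg0 s) (x s t) (x t M)) => //.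
- by rewrite H1 ?deg0_le //; deg_lia.
- by rewrite e1 e4 kr_comp.
- by rewrite H1 ?deg0_le //; deg_lia.
- by rewrite H1.
- by rewrite e2 e4.
Qed.

Lemma ipath_agree (x y : ipath L) s t M : is_ipath x -> is_ipath y ->
  x deg0 M = y deg0 M -> degle s t -> degle t M -> x s t = y s t.
Proof.
by move=> hx hy xy st tM; rewrite (ipath_seg hx st tM) (ipath_seg hy st tM) xy.
Qed.

Lemma ipath_prefix (x : ipath L) m n : is_ipath x -> degle m n ->
  prefix (x deg0 m) (x deg0 n).
Proof.
by move=> [_ _ H3] mn; have [e1 e2] := H3 _ _ _ (deg0_le m) mn; exists (x m n).
Qed.

Lemma kr_ipath (x : ipath L) p : is_ipath x -> kr L (x deg0 p) = kr L (x deg0 deg0).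
Proof.
move=> [_ _ H3]; have [e1 ->] := H3 _ _ _ (degle_refl deg0) (deg0_le p).
by rewrite kr_comp.
Qed.

Lemma ishift_ipath (x : ipath L) n : is_ipath x -> is_ipath (ishift n x).
Proof.
move=> [H1 H2 H3]; split.
- by move=> p q pq; rewrite /ishift H1 ?degleD2r //; deg_lia.
- by move=> p; apply: H2.
- by move=> p q m pq qm; apply: H3; apply: degleD2r.
Qed.

Lemma ishiftD (x : ipath L) m n p q :
  ishift n (ishift m x) p q = ishift (degadd n m) x p q.
Proof. by rewrite /ishift; congr x; deg_lia. Qed.

Lemma ishift_sub (x : ipath L) N r a b : degle r N ->
  ishift (degsub N r) (ishift r x) a b = ishift N x a b.
Proof. by move=> rN; rewrite ishiftD (_ : degadd (degsub N r) r = N) //; deg_lia. Qed.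

Lemma ishift_ieq (x y : ipath L) n : ieq x y -> ieq (ishift n x) (ishift n y).
Proof. by move=> xy p q pq; apply: xy; apply: degleD2r. Qed.

Lemma ieq_sym (x y : ipath L) : ieq x y -> ieq y x.
Proof. by move=> xy p q pq; rewrite xy. Qed.

Lemma ieq_trans (x y z : ipath L) : ieq x y -> ieq y z -> ieq x z.
Proof. by move=> xy yz p q pq; rewrite xy ?yz. Qed.

Definition cst (n : nat) : deg k := [ffun=> n].

Definition dsum (q : deg k) : nat := \sum_(i < k) q i.

Lemma dsum_ge (q : deg k) i : q i <= dsum q.
Proof. by rewrite /dsum (bigD1 i) //= leq_addr. Qed.

Section Limit.
Variable c : nat -> P.
Hypothesis c_prefix : forall n, prefix (c n) (c n.+1).
Hypothesis c_deg : forall n i, n <= d (c n) i.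

Definition lim : ipath L := fun p q => seg (c (dsum q)) p q.

Lemma chain_prefix n m : n <= m -> prefix (c n) (c m).
Proof.
move=> nm; rewrite -(subnKC nm); elim: (m - n) => [|j IH].
  by rewrite addn0; apply: prefix_refl.
by rewrite addnS; apply: prefix_trans IH (c_prefix _).
Qed.

Lemma le_dsum_deg (q : deg k) : degle q (d (c (dsum q))).
Proof. by apply/degleP => i; apply: leq_trans (dsum_ge q i) (c_deg _ _). Qed.

Lemma lim_seg n s t : degle s t -> degle t (d (c n)) -> lim s t = seg (c n) s t.
Proof.
move=> st tn; rewrite /lim.
rewrite -(seg_prefix (chain_prefix (leq_maxr n (dsum t))) st (le_dsum_deg t)).
by rewrite (seg_prefix (chain_prefix (leq_maxl n (dsum t))) st tn).
Qed.

Lemma lim_ipath : is_ipath lim.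
Proof.
split.
- by move=> p q pq; rewrite /lim seg_deg // le_dsum_deg.
- by move=> p; rewrite /lim {1}seg_diag // le_dsum_deg.
- move=> p q m pq qm.
  have mN := le_dsum_deg m; have qN := degle_trans qm mN.
  rewrite (lim_seg pq qN) (lim_seg qm mN) (lim_seg (degle_trans pq qm) mN).
  exact: seg_comp.
Qed.

Lemma lim_init n : lim deg0 (d (c n)) = c n.
Proof. by rewrite (lim_seg (n := n)) ?seg_whole ?deg0_le ?degle_refl. Qed.

End Limit.

Lemma exists_ipath_along (R : nat -> P -> Prop) l0 :
    (forall n l, exists l', [/\ prefix l l', degle (cst n.+1) (d l') & R n l']) ->
  exists x, [/\ is_ipath x, x deg0 (d l0) = l0 &
    forall n, exists l, R n l /\ x deg0 (d l) = l].
Proof.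
move=> hR.
pose next n l := epsilon (inhabits l)
  (fun l' => [/\ prefix l l', degle (cst n.+1) (d l') & R n l']).
have next_spec n l :
    [/\ prefix l (next n l), degle (cst n.+1) (d (next n l)) & R n (next n l)].
  exact: epsilon_spec (hR n l).
pose c := nat_rect (fun _ => P) l0 next.
have c_prefix n : prefix (c n) (c n.+1) by have [] := next_spec n (c n).
have c_deg n i : n <= d (c n) i.
  case: n => [|n] //; have [_ /degleP/(_ i) + _] := next_spec n (c n).
  by rewrite ffunE.
exists (lim c); split; first exact: lim_ipath.
- exact: (lim_init c_prefix c_deg 0).
- move=> n; exists (c n.+1); split; first by have [] := next_spec n (c n).
  exact: lim_init.
Qed.

Section SourceFree.
Hypothesis hsf : source_free L.

Lemma exists_extension l D : exists l', prefix l l' /\ degle D (d l').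
Proof.
have [al [ral dal]] := hsf (ks L l) D.
exists (comp l al); split; first by exists al.
by rewrite kd_comp ?ral // dal; deg_lia.
Qed.

Lemma exists_ipath_from l : exists x, is_ipath x /\ x deg0 (d l) = l.
Proof.
have [|x [hx hl _]] := @exists_ipath_along (fun _ _ => True) l.
  by move=> n l'; have [l'' [? ?]] := exists_extension l' (cst n.+1); exists l''.
by exists x.
Qed.

End SourceFree.

Section Concat.
Variables (rho : P) (z : ipath L).
Hypothesis hz : is_ipath z.
Hypothesis hz0 : z deg0 deg0 = kid L (ks L rho).

Let cc n := comp rho (z deg0 (cst n)).

Let rho_z n : ks L rho = kr L (z deg0 n).
Proof. by rewrite kr_ipath // hz0 kr_id. Qed.

Let cc_prefix n : prefix (cc n) (cc n.+1).
Proof. by apply: prefix_compl (rho_z _) (ipath_prefix hz _); deg_lia. Qed.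

Let cc_deg n i : n <= d (cc n) i.
Proof.
have [H1 _ _] := hz.
by rewrite /cc (kd_comp (rho_z _)) H1 ?deg0_le // !ffunE /=; lia.
Qed.

Definition concat := lim cc.

Lemma concat_seg s t : degle s t -> degle t (d rho) -> concat s t = seg rho s t.
Proof.
have cc0 : cc 0 = rho.
  by rewrite /cc (_ : cst 0 = deg0) ?hz0 ?kid_r //; deg_lia.
by move=> st tr; rewrite /concat (lim_seg cc_prefix cc_deg (n := 0)) ?cc0.
Qed.

Lemma concat_shift : ieq (ishift (d rho) concat) z.
Proof.
move=> a b ab; rewrite /ishift.
set n := dsum b.
have bn : degle b (cst n) by apply/degleP => i; rewrite ffunE; apply: dsum_ge.
have [H1 _ H3] := hz.
have [e1 e2] := H3 _ _ _ (deg0_le a) (degle_trans ab bn).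
have [e3 e4] := H3 _ _ _ ab bn.
have rz := rho_z a.
have bN : degle (degadd b (d rho)) (d (cc n)).
  by rewrite /cc (kd_comp (rho_z _)) H1 ?deg0_le //; deg_lia.
rewrite /concat (lim_seg cc_prefix cc_deg (degleD2r _ ab) bN).
apply: (@seg_unique _ _ _ _ _ (comp rho (z deg0 a)) (z a b) (z b (cst n))).
- exact: degleD2r.
- exact: bN.
- by rewrite ks_comp // e4 kr_comp in e1 *.
- exact: e3.
- by rewrite (kd_comp rz) H1 ?deg0_le //; deg_lia.
- by rewrite H1 //; deg_lia.
- by rewrite /cc e2 e4 -kcomp_assoc // -e4.
Qed.

Lemma iconcat_concat : iconcat rho z concat.
Proof.
split; [exact: lim_ipath cc_prefix cc_deg | | exact: concat_shift].
by rewrite concat_seg ?seg_whole ?deg0_le ?degle_refl.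
Qed.

End Concat.

End InfinitePaths.

Section SelfSimilar.
Variables (G : groupType) (k : nat) (L : kgraph k) (A : ssaction G L).
Local Notation P := (kpath L).
Local Notation d := (kd L).

Lemma iact_ieq g (x y : ipath L) : ieq x y -> ieq (iact A g x) (iact A g y).
Proof. by move=> xy p q pq; rewrite /iact !xy ?deg0_le. Qed.

Lemma iact_init g (x : ipath L) n : is_ipath x -> iact A g x deg0 n = actP A g (x deg0 n).
Proof. by move=> [_ H2 _]; rewrite /iact H2 res_vert. Qed.

Lemma ishift_iact g (w : ipath L) m : is_ipath w ->
  ieq (ishift m (iact A g w)) (iact A (res A g (w deg0 m)) (ishift m w)).
Proof.
move=> [_ _ H3] a b ab; rewrite /ishift /iact degadd0.
have ma : degle m (degadd a m) by deg_lia.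
by have [e1 ->] := H3 _ _ _ (deg0_le m) ma; rewrite res_comp.
Qed.

Lemma iconcat_ks (mu : P) (w y : ipath L) :
  iconcat mu w y -> ks L mu = kr L (w deg0 deg0).
Proof.
move=> [[_ _ H3] y0 yw]; have [e _] := H3 _ _ _ (deg0_le (d mu)) (degle_refl _).
by rewrite y0 in e; rewrite e -(yw _ _ (degle_refl _)) /ishift degadd0.
Qed.

Lemma cycline_of_paths (mu : P) g (nu : P) (x0 : ipath L) :
    is_ipath x0 -> x0 deg0 deg0 = kid L (ks L nu) ->
    (forall x, is_ipath x -> x deg0 deg0 = kid L (ks L nu) ->
      exists y, iconcat mu (iact A g x) y /\ iconcat nu x y) ->
  cycline A mu g nu.
Proof.
move=> hx0 x00 hpaths; split => //.
have [y [hmu _]] := hpaths x0 hx0 x00.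
by rewrite (iconcat_ks hmu) iact_init // x00 actP_id kr_id.
Qed.

Lemma cycline_trivial_of_aperiodic : pseudo_free A -> G_aperiodic A ->
  forall mu g nu, cycline A mu g nu -> mu = nu /\ g = 1%g.
Proof.
move=> hpf ap mu g nu [_ hc].
have [x [hx x00 xap]] := ap (ks L nu).
have [y [[_ y0m ym] [_ y0n yn]]] := hc x hx x00.
set m := d mu in y0m ym *; set n := d nu in y0n yn *.
set g' := res A g (x deg0 n).
have period : ieq (ishift m x) (iact A g' (ishift n x)).
  apply: ieq_trans (ishift_ieq m (ieq_sym yn)) _.
  apply: ieq_trans _ (ishift_iact g n hx).
  by move=> a b ab; rewrite ishiftD degaddC -ishiftD; apply: ishift_ieq ym _ _ ab.
have [g'1 mn] : g' = 1%g /\ m = n.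
  by apply: NNPP => /not_and_or ntriv; apply: xap ntriv period.
split; first by rewrite -y0m -y0n mn.
apply: (hpf g (x deg0 n)) => //.
rewrite -(iact_init g n hx) -(ym _ _ (deg0_le n)) mn.
exact: yn _ _ (deg0_le n).
Qed.

Definition excludes g (p q : deg k) (l : P) :=
  forall x, is_ipath x -> x deg0 (d l) = l -> ~ ieq (ishift p x) (iact A g (ishift q x)).

(* A failure of [sigma^p X = g . sigma^q X] is witnessed on a finite segment of
   [X], hence by every infinite path through a long enough initial segment. *)
Lemma excluding_initial_segment (X : ipath L) g p q N : is_ipath X ->
    ~ ieq (ishift p X) (iact A g (ishift q X)) ->
  exists M, degle N M /\ excludes g p q (X deg0 M).
Proof.
move=> hX hne.
have [a [b [ab hab]]] : exists a b, degle a b /\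
    ishift p X a b <> iact A g (ishift q X) a b.
  apply: NNPP => hall; apply: hne => a b ab; apply: NNPP => hab.
  by apply: hall; exists a, b.
pose M : deg k := [ffun i => maxn (N i) (maxn (b i + p i) (b i + q i))].
exists M; split; first by rewrite /M; deg_lia.
have dM : d (X deg0 M) = M by have [H1 _ _] := hX; rewrite H1 ?deg0_le //; deg_lia.
move=> x hx; rewrite dM => hxM hper; apply: hab.
have agree s t : degle s t -> degle t M -> x s t = X s t.
  exact: ipath_agree hx hX hxM.
have := hper a b ab; rewrite /ishift /iact !agree //; rewrite /M; deg_lia.
Qed.

Section PeriodicTails.
Variables (rho : P) (g : G) (p q : deg k).
Local Notation N := (d rho).
Local Notation mu := (seg rho p N).
Local Notation nu := (seg rho q N).

Lemma cycline_of_periodic_tails : degle p N -> degle q N -> source_free L ->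
    (forall z, is_ipath z -> z deg0 deg0 = kid L (ks L rho) ->
      ieq (ishift p (concat rho z)) (iact A g (ishift q (concat rho z)))) ->
  cycline A (actP A g nu) (res A g nu) mu.
Proof.
move=> hp hq hsf hper.
have [x0 [hx0 x00]] := exists_ipath_from hsf (kid L (ks L mu)).
rewrite kd_id in x00.
apply: (cycline_of_paths hx0 x00) => x hx; rewrite ks_seg_end // => x0'.
have [hX hX0 hXs] := iconcat_concat hx x0'.
set X := concat rho x in hX hX0 hXs hper *.
have hper' := hper x hx x0'; rewrite -/X in hper'.
have tail r : degle r N -> ishift r X deg0 (degsub N r) = seg rho r N.
  move=> rN; rewrite /ishift degadd0 (_ : degadd (degsub N r) r = N); last by deg_lia.
  by rewrite /X concat_seg ?degle_refl.
exists (ishift p X); split; split; rewrite ?actP_d ?seg_deg ?degle_refl //.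
- exact: ishift_ipath.
- by rewrite hper' ?deg0_le // (iact_init _ _ (ishift_ipath q hX)) tail.
- apply: ieq_trans (ishift_ieq _ hper') _.
  apply: ieq_trans (ishift_iact g _ (ishift_ipath q hX)) _.
  by rewrite tail //; apply: iact_ieq => a b ab; rewrite ishift_sub //; apply: hXs.
- exact: ishift_ipath.
- exact: tail.
- by move=> a b ab; rewrite ishift_sub //; apply: hXs.
Qed.

Lemma exists_aperiodic_tail : degle p N -> degle q N -> source_free L -> pseudo_free A ->
    (forall mu g nu, cycline A mu g nu -> mu = nu /\ g = 1%g) ->
    (g <> 1%g \/ p <> q) ->
  exists z, [/\ is_ipath z, z deg0 deg0 = kid L (ks L rho) &
    ~ ieq (ishift p (concat rho z)) (iact A g (ishift q (concat rho z)))].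
Proof.
move=> hp hq hsf hpf hcyc ntriv; apply: NNPP => none.
have [e g'1] : actP A g nu = mu /\ res A g nu = 1%g.
  apply: hcyc; apply: cycline_of_periodic_tails => // z hz hz0.
  by apply: NNPP => hne; apply: none; exists z.
have pq : p = q.
  by move: (congr1 d e); rewrite actP_d !seg_deg ?degle_refl // => e'; deg_lia.
rewrite -pq in e g'1 ntriv; case: ntriv => // ntriv; apply: ntriv.
exact: hpf e g'1.
Qed.

End PeriodicTails.

Lemma exists_excluding_extension : source_free L -> pseudo_free A ->
    (forall mu g nu, cycline A mu g nu -> mu = nu /\ g = 1%g) ->
  forall l D g p q, (g <> 1%g \/ p <> q) ->
  exists l', [/\ prefix l l', degle D (d l') & excludes g p q l'].
Proof.
move=> hsf hpf hcyc l D g p q ntriv.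
pose E : deg k := [ffun i => maxn (D i) (maxn (p i) (q i))].
have [rho [lrho hrho]] := exists_extension hsf l E.
have [|| z [hz hz0 hne]] := exists_aperiodic_tail (rho := rho) _ _ hsf hpf hcyc ntriv;
  try by deg_lia.
have [hX hX0 _] := iconcat_concat hz hz0.
have [M [NM hM]] := excluding_initial_segment (d rho) hX hne.
exists (concat rho z deg0 M); split => //.
- by apply: prefix_trans lrho _; rewrite -{1}hX0; apply: ipath_prefix.
- by have [H1 _ _] := hX; rewrite H1 ?deg0_le //; deg_lia.
Qed.

End SelfSimilar.

Lemma countable_periods (G : groupType) k : countable G ->
  exists e : nat -> G * deg k * deg k, forall t, exists n, e n = t.
Proof.
move=> [f f_inj].
pose code (t : G * deg k * deg k) := pickle (f t.1.1, t.1.2, t.2).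
have code_inj : injective code.
  by move=> [[g p] q] [[g' p'] q'] /(pcan_inj pickleK) [/f_inj -> -> ->].
exists (fun n => epsilon (inhabits (1%g, deg0, deg0)) (fun t => code t = n)).
move=> t; exists (code t); apply: code_inj.
by apply: (epsilon_spec _ (fun t' => code t' = code t)); exists t.
Qed.

Lemma aperiodic_of_cycline_trivial (G : groupType) k (L : kgraph k) (A : ssaction G L) :
    countable G -> source_free L -> pseudo_free A ->
    (forall mu g nu, cycline A mu g nu -> mu = nu /\ g = 1%g) ->
  G_aperiodic A.
Proof.
move=> hGc hsf hpf hcyc v.
have [e he] := countable_periods k hGc.
pose R n l := let: (g, p, q) := e n in (g <> 1%g \/ p <> q) -> excludes A g p q l.
have [|x [hx hx0 hR]] := @exists_ipath_along _ _ R (kid L v).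
  move=> n l; rewrite /R; case: (e n) => [[g p] q].
  have [ntriv | triv] := classic (g <> 1%g \/ p <> q).
    have [l' [? ? ?]] := exists_excluding_extension hsf hpf hcyc l (cst k n.+1) ntriv.
    by exists l'.
  by have [l' [? ?]] := exists_extension hsf l (cst k n.+1); exists l'.
exists x; split => //; first by rewrite kd_id in hx0.
move=> g p q ntriv; have [n en] := he (g, p, q); have [l [hl hxl]] := hR n.
by move: hl; rewrite /R en => /(_ ntriv); apply.
Qed.

Theorem proposition3p6 (k : nat) (hk : (0 < k)%N) (L : kgraph k)
    (G : groupType) (A : ssaction G L)
    (hGc : countable G) (hrf : row_finite L) (hsf : source_free L)
    (hpf : pseudo_free A) :
  G_aperiodic A <->
  (forall (mu : kpath L) (g : G) (nu : kpath L),
      cycline A mu g nu -> mu = nu /\ g = 1%g).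
Proof.
split; first exact: cycline_trivial_of_aperiodic.
exact: aperiodic_of_cycline_trivial.
Qed.
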